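(* Let $p$ be a prime, $A$ a torsion-free $\mathbb{Z}_{(p)}$-algebra, $\mathfrak a\subseteq A$ a divided-power ideal, $P,Q\in A[X]$ monic, and $N\ge1$. If $e_n(P)\equiv e_n(Q)\pmod{\mathfrak a}$ for all $1\le n\le N$, then $p_N(P)\equiv p_N(Q)\pmod{N\mathfrak a}$.
   Context: An ideal $\mathfrak a$ of a torsion-free $\mathbb{Z}_{(p)}$-algebra $A$ is a divided-power ideal if $a^p\in p\,\mathfrak a$ for all $a\in\mathfrak a$ (equivalently $a^k/k!\in\mathfrak a$ in $A\otimes\mathbb{Q}$ for all $a\in\mathfrak a$, $k\ge1$). For a monic $P=X^d+a_1X^{d-1}+\dots+a_d\in A[X]$: $e_0(P)=1$, $e_n(P)=(-1)^na_n$ for $1\le n\le d$, $e_n(P)=0$ for $n>d$; and $p_n(P)$ for $n\ge1$ is defined by Newton's identities $p_n(P)=\sum_{i=1}^{n-1}(-1)^{i-1}e_i(P)p_{n-i}(P)+(-1)^{n-1}n\,e_n(P)$ (for $A$ a domain, the $n$-th power sum of the roots of $P$ with multiplicity). $N\mathfrak a=\{Na:a\in\mathfrak a\}$. *)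

From HB Require Import structures.
From mathcomp Require Import all_boot all_order all_algebra.
Set Implicit Arguments. Unset Strict Implicit. Unset Printing Implicit Defensive.
Import GRing.Theory.
Local Open Scope ring_scope.

(* A (commutative) ring A is a Z_(p)-algebra iff every integer prime to p
   is invertible in A (the structure map Z_(p) -> A is then unique). *)
Definition Zp_local_algebra (p : nat) (A : comNzRingType) : Prop :=
  forall n : nat, coprime n p -> exists y : A, n%:R * y = 1.

Definition torsion_free (A : comNzRingType) : Prop :=
  forall (n : nat) (x : A), (0 < n)%N -> x *+ n = 0 -> x = 0.

Definition is_ideal (A : comNzRingType) (I : {pred A}) : Prop :=
  [/\ 0 \in I,
      (forall x y, x \in I -> y \in I -> x + y \in I) &
      (forall r x, x \in I -> r * x \in I)].

Definition nat_mul_set (A : comNzRingType) (N : nat) (I : {pred A}) (x : A) : Prop :=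
  exists2 y, y \in I & x = y *+ N.

Definition dp_ideal (p : nat) (A : comNzRingType) (I : {pred A}) : Prop :=
  is_ideal I /\ forall a, a \in I -> nat_mul_set p I (a ^+ p).

(* e_n(P) for monic P of degree d = size P - 1: P = X^d + a_1 X^(d-1) + ... + a_d,
   a_n = P`_(d - n); e_0 = 1, e_n = (-1)^n a_n for 1 <= n <= d, e_n = 0 for n > d. *)
Definition elem_sym (A : comNzRingType) (P : {poly A}) (n : nat) : A :=
  if n == 0%N then 1
  else if (n <= (size P).-1)%N then (-1) ^+ n * P`_((size P).-1 - n)
  else 0.

(* Newton step: given s = [:: p_1; ...; p_(n-1)], compute p_n. *)
Definition newton_step (A : comNzRingType) (P : {poly A}) (s : seq A) (n : nat) : A :=
  \sum_(1 <= i < n) (-1) ^+ (i.-1) * elem_sym P i * nth 0 s (n - i).-1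
  + (-1) ^+ (n.-1) * (elem_sym P n *+ n).

Fixpoint psums (A : comNzRingType) (P : {poly A}) (n : nat) : seq A :=
  match n with
  | 0 => [::]
  | n'.+1 => rcons (psums P n') (newton_step P (psums P n') n)
  end.

Definition psum (A : comNzRingType) (P : {poly A}) (n : nat) : A :=
  nth 0 (psums P n) n.-1.

(* Work with power series truncated modulo X^(N+1).  Let g and h be the series
   sum_i (-1)^i e_i X^i of P and Q.  Newton's identities say that the series of
   power sums is -X g'/g, i.e. minus the logarithmic derivative theta (log g) with
   theta = X d/dX.  As g and h agree modulo a, we have g = h (1 - E) with E in a[X]
   and E(0) = 0, so the two power-sum series differ by
   -theta (log (1 - E)) = sum_k E^k theta E = sum_k theta (E^(k+1)) / (k+1).
   Divided powers of a pass to a[X], so E^(k+1) lies in (k+1)! a[X]; the X^N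
   coefficient of theta (E^(k+1)) is N times that of E^(k+1), hence lies in
   N (k+1)! a, and torsion-freeness allows the division by k+1. *)

From mathcomp Require Import all_boot all_order all_algebra.
From mathcomp Require Import zify ring.
Set Implicit Arguments. Unset Strict Implicit. Unset Printing Implicit Defensive.
Import GRing.Theory.
Local Open Scope ring_scope.

Lemma fact_addn_coprime p q j : prime p -> (j < p)%N ->
  exists2 t, coprime t p & (p * q + j)`! = ((p * q)`! * t)%N.
Proof.
move=> p_pr; elim: j => [|j IHj] lt_jp; first by exists 1%N; rewrite ?coprime1n ?addn0 ?muln1.
have [t t_cop def_t] := IHj (ltnW lt_jp).
exists ((p * q + j.+1) * t)%N; last by rewrite addnS factS def_t mulnCA.
rewrite coprimeMl t_cop andbT coprime_sym prime_coprime //.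
by rewrite (dvdn_addr _ (dvdn_mulr q (dvdnn p))) gtnNdvd.
Qed.

Lemma fact_muln_prime p q : prime p ->
  exists2 s, coprime s p & (p * q)`! = (p ^ q * q`! * s)%N.
Proof.
move=> p_pr; have p_gt0 := prime_gt0 p_pr.
elim: q => [|q [s s_cop def_s]]; first by exists 1%N; rewrite ?coprime1n ?muln0.
have lt_p1p : (p.-1 < p)%N by rewrite ltn_predL.
have [t t_cop def_t] := fact_addn_coprime q p_pr lt_p1p.
exists (s * t)%N; first by rewrite coprimeMl s_cop t_cop.
have pqS : (p * q.+1 = (p * q + p.-1).+1)%N by rewrite mulnS; lia.
by rewrite pqS factS def_t def_s -pqS factS expnS; ring.
Qed.

Section IdealMultiples.

Variables (R : comNzRingType) (J : {pred R}).
Hypothesis J_ideal : is_ideal J.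

Lemma idealM r x : x \in J -> r * x \in J.
Proof. by case: J_ideal => _ _; apply. Qed.

Lemma idealMn x n : x \in J -> x *+ n \in J.
Proof. by rewrite -mulr_natl; apply: idealM. Qed.

Lemma idealN x : x \in J -> - x \in J.
Proof. by rewrite -mulN1r; apply: idealM. Qed.

Lemma ideal_sum (T : Type) (r : seq T) (F : T -> R) :
  (forall i, F i \in J) -> \sum_(i <- r) F i \in J.
Proof.
case: J_ideal => J0 JD _ JF.
by elim: r => [|a r IHr]; rewrite ?big_nil ?big_cons ?JD.
Qed.

Lemma nat_mul_set0 m : nat_mul_set m J 0.
Proof. by case: J_ideal => J0 _ _; exists 0; rewrite ?mul0rn. Qed.

Lemma nat_mul_setD m x y :
  nat_mul_set m J x -> nat_mul_set m J y -> nat_mul_set m J (x + y).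
Proof.
case: J_ideal => _ JD _ [a Ja ->] [b Jb ->].
by exists (a + b); rewrite ?JD ?mulrnDl.
Qed.

Lemma nat_mul_set_sum m (T : Type) (r : seq T) (F : T -> R) :
  (forall i, nat_mul_set m J (F i)) -> nat_mul_set m J (\sum_(i <- r) F i).
Proof.
move=> JF; elim: r => [|a r IHr]; first by rewrite big_nil; apply: nat_mul_set0.
by rewrite big_cons; apply: nat_mul_setD.
Qed.

Lemma nat_mul_setMl m r x : nat_mul_set m J x -> nat_mul_set m J (r * x).
Proof. by case=> a Ja ->; exists (r * a); rewrite ?idealM ?mulrnAr. Qed.

Lemma nat_mul_setMn m k x :
  nat_mul_set m J x -> nat_mul_set (m * k) J (x *+ k).
Proof. by case=> a Ja ->; exists a; rewrite ?mulrnA. Qed.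

Lemma nat_mul_setM a b x y :
  nat_mul_set a J x -> nat_mul_set b J y -> nat_mul_set (a * b) J (x * y).
Proof.
move=> [u Ju ->] [v Jv ->]; exists (u * v); first exact: idealM.
by rewrite mulrnAl mulrnAr -mulrnA mulnC.
Qed.

Lemma nat_mul_set_unit a s x : (exists z : R, s%:R * z = 1) ->
  nat_mul_set a J x -> nat_mul_set (a * s) J x.
Proof.
move=> [z sz1] [y Jy ->]; exists (y * z); first by rewrite mulrC idealM.
by rewrite mulnC mulrnA -mulrnAr -mulr_natl sz1 mulr1.
Qed.

Definition dp_powers (x : R) :=
  forall k, (0 < k)%N -> nat_mul_set k`! J (x ^+ k).

Lemma dp_powersMl r x : dp_powers x -> dp_powers (r * x).
Proof. by move=> dx k k_gt0; rewrite exprMn; apply: nat_mul_setMl; apply: dx. Qed.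

Lemma dp_powersD x y : dp_powers x -> dp_powers y -> dp_powers (x + y).
Proof.
move=> dx dy k k_gt0; rewrite exprDn; apply: nat_mul_set_sum => -[i /=].
rewrite ltnS leq_eqVlt => /predU1P[-> | lt_ik].
  by rewrite subnn mul1r binn -(muln1 k`!); apply: nat_mul_setMn; apply: dy.
have [->|i_gt0] := posnP i.
  by rewrite subn0 mulr1 bin0 -(muln1 k`!); apply: nat_mul_setMn; apply: dx.
rewrite -(bin_fact (ltnW lt_ik)) mulnC [(i`! * _)%N]mulnC.
apply: nat_mul_setMn; apply: nat_mul_setM; first by apply: dx; rewrite subn_gt0.
exact: dy.
Qed.

End IdealMultiples.

Section PolyIdeal.

Variables (A : comNzRingType) (I : {pred A}).
Hypothesis I_ideal : is_ideal I.

Definition poly_ideal : {pred {poly A}} := [pred q | q \is a polyOver I].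

Lemma poly_idealP (q : {poly A}) : reflect (forall i, q`_i \in I) (q \in poly_ideal).
Proof.
have [I0 _ _] := I_ideal; apply: (iffP (all_nthP 0)) => [Iq i | Iq i _].
  by have [/Iq // | /(nth_default 0) ->] := ltnP i (size q).
exact: Iq.
Qed.

Lemma poly_ideal_is_ideal : is_ideal poly_ideal.
Proof.
have [I0 ID _] := I_ideal.
split; first by apply/poly_idealP => i; rewrite coef0.
  by move=> q r /poly_idealP Iq /poly_idealP Ir; apply/poly_idealP => i; rewrite coefD ID.
move=> r q /poly_idealP Iq; apply/poly_idealP => i; rewrite coefM.
by apply: ideal_sum => // j; apply: idealM.
Qed.

End PolyIdeal.

Section DividedPowers.

Variables (p : nat) (A : comNzRingType) (I : {pred A}).
Hypotheses (p_pr : prime p) (A_local : Zp_local_algebra p A) (I_dp : dp_ideal p I).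

(* For k = pq, c^k = (c^p)^q lies in p^q q! I and k! is p^q q! times a unit;
   for p not dividing k, k itself is a unit. *)
Lemma dp_ideal_powers c : c \in I -> dp_powers I c.
Proof.
have [I_ideal c_p] := I_dp; move=> Ic k.
elim/ltn_ind: k c Ic => -[//|k] IHk c Ic _.
have [/dvdnP[q def_k] | p_ndvd] := boolP (p %| k.+1)%N.
  have q_gt0 : (0 < q)%N by case: q def_k.
  have lt_qk : (q < k.+1)%N by rewrite def_k ltn_Pmulr ?prime_gt1.
  have [s s_cop def_s] := fact_muln_prime q p_pr.
  have [z Iz def_z] := c_p c Ic.
  rewrite def_k [(q * p)%N]mulnC exprM def_z exprMn_n def_s [(p ^ q * _)%N]mulnC.
  apply: (nat_mul_set_unit I_ideal); first exact: A_local.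
  by apply: nat_mul_setMn; apply: IHk lt_qk z Iz q_gt0.
have [-> | k_gt0] := posnP k; first by exists c; rewrite ?expr1.
rewrite exprS factS mulnC; apply: (nat_mul_set_unit I_ideal).
  by apply: A_local; rewrite coprime_sym prime_coprime.
by apply: (nat_mul_setMl I_ideal); apply: IHk (ltnSn k) c Ic k_gt0.
Qed.

Lemma poly_ideal_dp_powers q : q \in poly_ideal I -> dp_powers (poly_ideal I) q.
Proof.
have I_ideal := I_dp.1; have IX_ideal := poly_ideal_is_ideal I_ideal.
elim/poly_ind: q => [|r c IHr] /(poly_idealP I_ideal) Iq.
  by move=> k k_gt0; rewrite expr0n gtn_eqF //; apply: nat_mul_set0.
have Ic : c \in I by move: (Iq 0%N); rewrite coefD coefMX coefC add0r.
have Ir : r \in poly_ideal I.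
  by apply/(poly_idealP I_ideal) => i; move: (Iq i.+1); rewrite coefD coefMX coefC addr0.
apply: dp_powersD => //; first by rewrite mulrC; apply/dp_powersMl/IHr.
move=> k k_gt0; rewrite -polyC_exp.
have [z Iz ->] := dp_ideal_powers Ic k_gt0.
exists z%:P; last by rewrite polyCMn.
by apply/(poly_idealP I_ideal) => i; rewrite coefC; case: eqP => _ //; case: I_ideal.
Qed.

End DividedPowers.

Definition eqmodXn (A : comNzRingType) (M : nat) (p q : {poly A}) :=
  exists r, p = q + r * 'X^M.

Definition theta (A : comNzRingType) (p : {poly A}) := 'X * p^`().

Section TruncatedSeries.

Variables (A : comNzRingType) (M : nat).
Implicit Types p q r s u v : {poly A}.

Lemma eqmodXn_refl p : eqmodXn M p p.
Proof. by exists 0; rewrite mul0r addr0. Qed.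

Lemma eqmodXn_sym p q : eqmodXn M p q -> eqmodXn M q p.
Proof. by case=> r ->; exists (- r); rewrite mulNr addrK. Qed.

Lemma eqmodXn_trans q p s : eqmodXn M p q -> eqmodXn M q s -> eqmodXn M p s.
Proof. by case=> r -> [t ->]; exists (t + r); rewrite mulrDl addrA. Qed.

Lemma eqmodXnD p q r s :
  eqmodXn M p q -> eqmodXn M r s -> eqmodXn M (p + r) (q + s).
Proof. by case=> a -> [b ->]; exists (a + b); ring. Qed.

Lemma eqmodXnN p q : eqmodXn M p q -> eqmodXn M (- p) (- q).
Proof. by case=> a ->; exists (- a); ring. Qed.

Lemma eqmodXnM p q r s :
  eqmodXn M p q -> eqmodXn M r s -> eqmodXn M (p * r) (q * s).
Proof. by case=> a -> [b ->]; exists (a * s + q * b + a * b * 'X^M); ring. Qed.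

Lemma eqmodXnMl r p q : eqmodXn M p q -> eqmodXn M (r * p) (r * q).
Proof. exact: eqmodXnM (eqmodXn_refl r). Qed.

Lemma eqmodXn_coef p q n : eqmodXn M p q -> (n < M)%N -> p`_n = q`_n.
Proof. by case=> r -> lt_nM; rewrite coefD coefMXn lt_nM addr0. Qed.

Lemma coef_eqmodXn p q : (forall n, (n < M)%N -> p`_n = q`_n) -> eqmodXn M p q.
Proof.
move=> pq; exists (drop_poly M (p - q)).
have -> : drop_poly M (p - q) * 'X^M = p - q.
  rewrite -[RHS](poly_take_drop M) [take_poly _ _](_ : _ = 0) ?add0r //.
  apply/polyP => i; rewrite coef_take_poly coef0 coefB.
  by case: ifP => // /pq ->; rewrite subrr.
by rewrite addrC subrK.
Qed.

Lemma eqmodXn_inv u : u`_0 = 1 -> exists v, eqmodXn M (v * u) 1.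
Proof.
move=> u0; suff [v vu] : exists v, forall n, (n < M)%N -> (v * u)`_n = (n == 0%N)%:R.
  by exists v; apply: coef_eqmodXn => n /vu ->; rewrite coef1.
elim: M => [|m [v vu]]; first by exists 0.
exists (v + ((m == 0%N)%:R - (v * u)`_m)%:P * 'X^m) => n lt_nm.
rewrite mulrDl -mulrA (mulrC 'X^m) coefD coefCM coefMXn.
case: (ltngtP n m) => [lt_nm' | lt_mn | ->]; [by rewrite vu // mulr0 addr0 | lia |].
by rewrite subnn u0 mulr1 addrC subrK.
Qed.

Lemma eqmodXn_mul1 u p : eqmodXn M u 1 -> eqmodXn M (u * p) p.
Proof.
by move=> u1; rewrite -[X in eqmodXn _ _ X]mul1r; exact: eqmodXnM u1 (eqmodXn_refl p).
Qed.

Lemma eqmodXn_mulKr v u p q : eqmodXn M (v * u) 1 ->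
  eqmodXn M (u * p) (u * q) -> eqmodXn M p q.
Proof.
move=> vu upq; have Mv := eqmodXnMl v upq; rewrite !mulrA in Mv.
exact: eqmodXn_trans (eqmodXn_sym (eqmodXn_mul1 p vu))
                     (eqmodXn_trans Mv (eqmodXn_mul1 q vu)).
Qed.

Lemma eqmodXn_geometric (E : {poly A}) : E`_0 = 0 ->
  eqmodXn M ((1 - E) * \sum_(k < M) E ^+ k) 1.
Proof.
move=> E0; exists (- drop_poly 1 E ^+ M).
rewrite -opprB mulNr -subrX1 opprB mulNr -exprMn.
congr (_ - _ ^+ _); rewrite -[LHS](poly_take_drop 1) [take_poly _ _](_ : _ = 0) ?add0r //.
by apply/polyP => -[|i]; rewrite coef_take_poly coef0 //= E0.
Qed.

Lemma thetaD p q : theta (p + q) = theta p + theta q.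
Proof. by rewrite /theta derivD mulrDr. Qed.

Lemma thetaN p : theta (- p) = - theta p.
Proof. by rewrite /theta derivN mulrN. Qed.

Lemma thetaM p q : theta (p * q) = theta p * q + p * theta q.
Proof. by rewrite /theta derivM; ring. Qed.

Lemma theta1 : theta (1 : {poly A}) = 0.
Proof. by rewrite /theta -polyC1 derivC mulr0. Qed.

Lemma thetaX n p : theta (p ^+ n.+1) = (p ^+ n * theta p) *+ n.+1.
Proof. by rewrite /theta deriv_exp /= mulrnAr; congr (_ *+ _); ring. Qed.

Lemma coef_theta p n : (theta p)`_n = p`_n *+ n.
Proof. by rewrite /theta coefXM; case: n => [|n] //=; rewrite coef_deriv. Qed.

Lemma eqmodXn_theta p q : eqmodXn M p q -> eqmodXn M (theta p) (theta q).
Proof.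
case=> r ->; exists (theta r + r *+ M).
rewrite thetaD thetaM /theta derivXn; case: M => [|m]; first by rewrite !mulr0n; ring.
by rewrite /= mulrnAr -exprS; ring.
Qed.

(* [g * pg = - theta g] makes [pg] the series [- theta (log g)]; the lemma says
   [- theta (log (1 - E)) = W * theta E] with [W = 1 / (1 - E)]. *)
Lemma eqmodXn_log_deriv v g h E W pg ph :
    eqmodXn M (v * h) 1 -> eqmodXn M g (h * (1 - E)) ->
    eqmodXn M ((1 - E) * W) 1 ->
    eqmodXn M (g * pg) (- theta g) -> eqmodXn M (h * ph) (- theta h) ->
  eqmodXn M pg (ph + W * theta E).
Proof.
move=> vh hg hW gpg hph; apply: (eqmodXn_mulKr vh).
have theta_g : eqmodXn M (theta g) (theta h * (1 - E) - h * theta E).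
  by have := eqmodXn_theta hg; rewrite thetaM thetaD thetaN theta1 add0r mulrN.
have step1 : eqmodXn M (h * pg) (W * (g * pg)).
  apply: eqmodXn_trans (eqmodXn_sym (eqmodXn_mul1 (h * pg) hW)) _.
  rewrite (_ : _ * (h * pg) = W * (h * (1 - E) * pg)); last by ring.
  exact/eqmodXnMl/eqmodXnM/eqmodXn_refl/eqmodXn_sym.
have step2 : eqmodXn M (W * (g * pg)) ((1 - E) * W * (- theta h) + h * (W * theta E)).
  rewrite (_ : _ + _ = W * - (theta h * (1 - E) - h * theta E)); last by ring.
  exact/eqmodXnMl/(eqmodXn_trans gpg)/eqmodXnN.
apply: eqmodXn_trans step1 (eqmodXn_trans step2 _).
rewrite mulrDr; apply: eqmodXnD; last exact: eqmodXn_refl.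
exact: eqmodXn_trans (eqmodXnMl _ (eqmodXn_sym hph)) (eqmodXn_mul1 _ hW).
Qed.

End TruncatedSeries.

Section Newton.

Variables (A : comNzRingType) (P : {poly A}).

Lemma size_psums n : size (psums P n) = n.
Proof. by elim: n => //= n IHn; rewrite size_rcons IHn. Qed.

Lemma nth_psums m k : (k < m)%N -> nth 0 (psums P m) k = psum P k.+1.
Proof.
elim: m => // m IHm lt_km; rewrite /= nth_rcons size_psums.
case: (ltngtP k m) => [lt_km' | lt_mk | ->]; [exact: IHm | lia |].
by rewrite /psum /= nth_rcons size_psums ltnn eqxx.
Qed.

Lemma psumS n : psum P n.+1 = newton_step P (psums P n) n.+1.
Proof. by rewrite /psum /= nth_rcons size_psums ltnn eqxx. Qed.

(* The junk value [psum P 0 = 0] makes the [j = n] term vanish. *)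
Lemma newton_identity n :
  \sum_(j < n.+1) (-1) ^+ j * elem_sym P j * psum P (n - j) =
  - ((-1) ^+ n * elem_sym P n *+ n).
Proof.
case: n => [|n]; first by rewrite big_ord1 mulr0 mulr0n oppr0.
rewrite big_ord_recl big_ord_recr /= subn0 subnn mulr0 addr0 psumS /newton_step.
set S := \sum_(i < n) _.
have -> : \sum_(1 <= i < n.+1)
    (-1) ^+ i.-1 * elem_sym P i * nth 0 (psums P n) (n.+1 - i).-1 = - S.
  rewrite big_add1 big_mkord -sumrN; apply: eq_bigr => i _.
  have lt_in := ltn_ord i.
  have [k def_k] : exists k, (n - i = k.+1)%N by exists (n - i).-1; rewrite prednK ?subn_gt0.
  by rewrite /bump /= add1n subSS def_k /= nth_psums ?exprS; [ring | lia].
by rewrite expr0 !mul1r [in RHS]exprS; ring.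
Qed.

End Newton.

Definition esym_series (A : comNzRingType) (P : {poly A}) (M : nat) :=
  \poly_(i < M) ((-1) ^+ i * elem_sym P i).

Definition psum_series (A : comNzRingType) (P : {poly A}) (M : nat) :=
  \poly_(i < M) psum P i.

Lemma esym_series0 (A : comNzRingType) (P : {poly A}) M :
  (esym_series P M.+1)`_0 = 1.
Proof. by rewrite coef_poly /= mul1r. Qed.

Lemma newton_eqmodXn (A : comNzRingType) (P : {poly A}) M :
  eqmodXn M (esym_series P M * psum_series P M) (- theta (esym_series P M)).
Proof.
apply: coef_eqmodXn => n lt_nM.
rewrite coefM coefN coef_theta coef_poly lt_nM -newton_identity.
apply: eq_bigr => -[j /= lt_jn]; rewrite !coef_poly.
by rewrite (leq_ltn_trans _ lt_nM) ?(leq_ltn_trans (leq_subr j n) lt_nM) // -ltnS.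
Qed.

Lemma coef_dp_powers_theta (A : comNzRingType) (I : {pred A}) (E : {poly A}) :
    is_ideal I -> torsion_free A -> dp_powers (poly_ideal I) E ->
  forall k n, nat_mul_set n I ((E ^+ k * theta E)`_n).
Proof.
move=> I_ideal A_tf dpE k n.
have [y /(poly_idealP I_ideal) Iy def_y] := dpE k.+1 (ltn0Sn k).
exists (y`_n *+ k`!); first exact: idealMn.
have := congr1 (coefp n) (thetaX k E); rewrite /= coef_theta coefMn def_y coefMn.
move=> def_n; apply/eqP; rewrite -subr_eq0; apply/eqP; apply: (A_tf k.+1) => //.
rewrite mulrnBl -def_n -!mulrnA factS.
by rewrite (_ : k`! * (n * k.+1) = k.+1 * k`! * n)%N ?subrr //; ring.
Qed.

Lemma esym_series_sub_ideal (A : comNzRingType) (I : {pred A}) (P Q : {poly A}) M :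
    is_ideal I ->
    (forall n : nat, (1 <= n < M)%N -> elem_sym P n - elem_sym Q n \in I) ->
  esym_series P M - esym_series Q M \in poly_ideal I.
Proof.
move=> I_ideal ePQ; apply/(poly_idealP I_ideal) => n; rewrite coefB !coef_poly.
case: ifP => lt_nM; last by rewrite subrr; case: I_ideal.
have [-> | n_gt0] := posnP n; first by rewrite subrr; case: I_ideal.
by rewrite -mulrBr idealM // ePQ // n_gt0.
Qed.

Theorem proposition2p9 (p : nat) (A : comNzRingType) (I : {pred A})
    (P Q : {poly A}) (N : nat) :
  prime p -> Zp_local_algebra p A -> torsion_free A -> dp_ideal p I ->
  P \is monic -> Q \is monic -> (1 <= N)%N ->
  (forall n : nat, (1 <= n <= N)%N -> elem_sym P n - elem_sym Q n \in I) ->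
  nat_mul_set N I (psum P N - psum Q N).
Proof.
move=> p_pr A_local A_tf I_dp _ _ _ ePQ; have I_ideal := I_dp.1.
set g := esym_series P N.+1; set h := esym_series Q N.+1.
have [v vh] := eqmodXn_inv N.+1 (esym_series0 Q N).
set E := (h - g) * v.
have IX_ideal := poly_ideal_is_ideal I_ideal.
have IE : E \in poly_ideal I.
  rewrite /E mulrC -opprB; apply/idealM/idealN/esym_series_sub_ideal => //.
have E0 : E`_0 = 0 by rewrite coef0M coefB !esym_series0 subrr mul0r.
have hg : eqmodXn N.+1 g (h * (1 - E)).
  have [r def_vh] := vh; exists ((h - g) * r).
  have -> : h * (1 - E) = h - (h - g) * (v * h) by rewrite /E; ring.
  by rewrite def_vh; ring.
have := eqmodXn_log_deriv vh hg (eqmodXn_geometric N.+1 E0)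
  (newton_eqmodXn P N.+1) (newton_eqmodXn Q N.+1).
move/(eqmodXn_coef (n := N))/(_ (ltnSn N)).
rewrite coefD !coef_poly ltnSn => ->; rewrite addrC addKr mulr_suml coef_sum.
apply: nat_mul_set_sum => // k; apply: coef_dp_powers_theta => //.
exact: poly_ideal_dp_powers p_pr A_local I_dp _ IE.
Qed.
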